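(* Let $N\ge1$, $1\le S\le N$, $L$ a band-width vector, $\dot W$ an $L$-admissible matrix, $W_\varepsilon=\mathrm{Id}+\varepsilon\dot W$, $\beta\in\Gamma$, $\alpha$ the $S$-banded vector with band vector $\beta$ and band-width vector $L$, $\mathcal P_\varepsilon$ the associated transfer operator, and $k\in\mathbb Z$. Assume $S=1$ or $k=0$. Let $\{f^{(1)}_k,\dots,f^{(N)}_k\}$ be an orthonormal eigenbasis of $e^{-2\pi ik\beta_1}\dot W$ with corresponding eigenvalues $\hat\lambda^{(1)}_k,\dots,\hat\lambda^{(N)}_k$. Then for every $\varepsilon>0$ and every $\ell$, $F^{(\ell)}_k(j,x)=f^{(\ell)}_k(j)e^{2\pi ikx}$ is an eigenfunction of $\mathcal P_\varepsilon$ with eigenvalue $\lambda^{(\ell)}_{k,\varepsilon}=e^{-2\pi ik\beta_1}+\varepsilon\hat\lambda^{(\ell)}_k$, and these are (up to scalar multiples) all eigenfunctions of $\mathcal P_\varepsilon$ of the form $f(j)e^{2\pi ikx}$. In particular, the $L^2(M)$-orthogonal projection $\Pi^{(\ell)}_{k,\varepsilon}$ onto the eigenfunction with eigenvalue $\lambda^{(\ell)}_{k,\varepsilon}$ equals, for every $\varepsilon>0$, the $L^2(M)$-orthogonal projection $\Pi^{(\ell)}_k$ onto $\operatorname{span}\{F^{(\ell)}_k\}$.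
   Context: $\mathbb S^1=\mathbb R/\mathbb Z$, $M=\{1,\dots,N\}\times\mathbb S^1$ with the product of the uniform probability and Lebesgue measure; $L^2(M)$ complex. For $\alpha\in\mathbb R^N$, $(\mathcal P_\varepsilon F)(j,x)=\sum_{j'=1}^N(W_\varepsilon)_{jj'}F(j',x-\alpha_j)$. A band-width vector is $L=(L_1,\dots,L_S)$ of positive integers with $\sum_sL_s=N$; $N_0=0$, $N_s=N_{s-1}+L_s$, $B_s=\{j:N_{s-1}<j\le N_s\}$; for distinct reals $\beta_1,\dots,\beta_S$ the $S$-banded vector $\alpha$ has $\alpha_j=\beta_s$ for $j\in B_s$. $\dot W$ is $L$-admissible if it is real symmetric and (1) $\dot W_{ij}\ge0$ for $i\ne j$, $\sum_j\dot W_{ij}=0$ for all $i$; (2) $\dot W$ has $N$ distinct eigenvalues; (3) each $\hat W_s=(\dot W_{jk})_{j,k\in B_s}$ has $L_s$ distinct eigenvalues. $\Gamma=\{\beta\in\mathbb R^S: e^{-2\pi ik\beta_{s_1}}\neq e^{-2\pi ik\beta_{s_2}}\text{ for all }k\ne0,\ s_1\ne s_2\}$. *)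

From mathcomp Require Import all_boot all_order all_algebra.
From mathcomp Require Import all_classical all_reals all_analysis.
From mathcomp.real_closed Require Import complex.
Set Implicit Arguments.
Unset Strict Implicit.
Unset Printing Implicit Defensive.
Import Order.TTheory GRing.Theory Num.Theory.
Local Open Scope ring_scope.
Local Open Scope complex_scope.

Section Defs.
Variable R : realType.

Definition tr_expi (t : R) : R[i] := (cos t) +i* (sin t).

Definition tr_e2pi (k : int) (x : R) : R[i] := tr_expi (2 * pi * k%:~R * x).

Definition tr_phase (k : int) (b : R) : R[i] := tr_expi (- (2 * pi * k%:~R * b)).

(* L = (L_1,...,L_S) is encoded as a seq nat of size S.  *)
Definition tr_band_width_vector (N : nat) (L : seq nat) : bool :=
  all (fun l => (0 < l)%N) L && (sumn L == N).

(* N_{s} (0-based: tr_band s starts at sumn of the first s widths) *)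
Definition tr_band_start (L : seq nat) (s : nat) : nat := sumn (take s L).

Definition tr_in_band (L : seq nat) (s j : nat) : bool :=
  (tr_band_start L s <= j < tr_band_start L s + nth 0%N L s)%N.

Definition tr_band (N : nat) (L : seq nat) (s : nat) : {set 'I_N} :=
  [set j : 'I_N | tr_in_band L s j].

Definition tr_banded_vector (N : nat) (L : seq nat) (beta : seq R)
  (alpha : 'I_N -> R) : Prop :=
  forall s, (s < size L)%N -> forall j : 'I_N, tr_in_band L s j ->
    alpha j = nth 0 beta s.

Definition tr_diag_block (N : nat) (L : seq nat) (Wd : 'M[R]_N) (s : nat)
  : 'M[R]_#|tr_band N L s| :=
  \matrix_(a, b) Wd (enum_val a) (enum_val b).

(* A (n x n) has (at least, hence exactly when m = n) m distinct eigenvalues *)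
Definition tr_has_distinct_eigenvalues (n : nat) (A : 'M[R]_n) (m : nat) : Prop :=
  exists s : seq R, [/\ size s = m, uniq s & all (eigenvalue A) s].

Definition tr_admissible (N : nat) (L : seq nat) (Wd : 'M[R]_N) : Prop :=
  [/\ Wd^T = Wd,
      (forall i j : 'I_N, i != j -> 0 <= Wd i j),
      (forall i : 'I_N, \sum_(j < N) Wd i j = 0),
      tr_has_distinct_eigenvalues Wd N &
      (forall s, (s < size L)%N ->
         tr_has_distinct_eigenvalues (tr_diag_block L Wd s) (nth 0%N L s))].

Definition tr_in_Gamma (beta : seq R) : Prop :=
  forall k : int, k != 0 ->
  forall s1 s2 : nat, (s1 < size beta)%N -> (s2 < size beta)%N -> s1 != s2 ->
    tr_phase k (nth 0 beta s1) != tr_phase k (nth 0 beta s2).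

(* functions on S^1 = R/Z are represented as functions on R *)
Definition tr_fun_M (N : nat) := 'I_N -> R -> R[i].

Definition tr_transfer (N : nat) (Wd : 'M[R]_N) (alpha : 'I_N -> R) (eps : R)
  (F : tr_fun_M N) : tr_fun_M N :=
  fun j x => \sum_(j' < N) ((1%:M + eps *: Wd) j j')%:C * F j' (x - alpha j).

Definition tr_is_eigenfunction (N : nat) (P : tr_fun_M N -> tr_fun_M N)
  (F : tr_fun_M N) (lam : R[i]) : Prop :=
  (exists j x, F j x != 0) /\ (forall j x, P F j x = lam * F j x).

Definition tr_mode (N : nat) (f : 'cV[R[i]]_N) (k : int) : tr_fun_M N :=
  fun j x => f j 0 * tr_e2pi k x.

(* integral over S^1 (identified with [0,1], Lebesgue measure) of a complex function *)
Definition tr_cint01 (h : R -> R[i]) : R[i] :=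
  (Rintegral lebesgue_measure `[0, 1] (fun x => complex.Re (h x))) +i*
  (Rintegral lebesgue_measure `[0, 1] (fun x => complex.Im (h x))).

(* L^2(M) inner product (uniform probability on {1..N} times Lebesgue) *)
Definition tr_inner_M (N : nat) (F G : tr_fun_M N) : R[i] :=
  (N%:R^-1)%:C * \sum_(j < N) tr_cint01 (fun x => F j x * (G j x)^*).

Definition tr_proj_span (N : nat) (F : tr_fun_M N) (H : tr_fun_M N) : tr_fun_M N :=
  fun j x => (tr_inner_M H F / tr_inner_M F F) * F j x.

(* H is (Lebesgue) integrable on M; this contains L^2(M) *)
Definition tr_integrable_M (N : nat) (H : tr_fun_M N) : Prop :=
  forall j : 'I_N,
    lebesgue_measure.-integrable `[0, 1] (fun x => (complex.Re (H j x))%:E) /\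
    lebesgue_measure.-integrable `[0, 1] (fun x => (complex.Im (H j x))%:E).

Definition tr_orthonormal (N : nat) (f : 'I_N -> 'cV[R[i]]_N) : Prop :=
  forall l m : 'I_N, \sum_(j < N) f l j 0 * (f m j 0)^* = (l == m)%:R.

End Defs.

(* On a mode F(j,x) = g(j) e^{2 pi i k x} the shift x |-> x - alpha_j only multiplies by the
   phase e^{-2 pi i k alpha_j}, which is the same number p for every j when S = 1 or k = 0.
   Hence P_eps acts on modes as the matrix p (Id + eps Wd), and mode eigenfunctions are exactly
   the modes of eigenvectors of Wd.  As Wd has N distinct eigenvalues its eigenspaces are lines,
   and the orthonormal eigenbasis f exhausts them, so every mode eigenfunction is a nonzero
   multiple of some F^(l)_k; the projection onto span{c F} does not depend on c != 0. *)

From Pilot Require Import Defs.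
From mathcomp Require Import all_boot all_order all_algebra.
From mathcomp Require Import all_classical all_reals all_analysis.
From mathcomp.real_closed Require Import complex.
From mathcomp Require Import measurable_realfun ring zify.
Set Implicit Arguments.
Unset Strict Implicit.
Unset Printing Implicit Defensive.
Import Order.TTheory GRing.Theory Num.Theory.
Import numFieldNormedType.Exports.
Local Open Scope ring_scope.
Local Open Scope complex_scope.

Section SimpleSpectrum.
Variables (F : fieldType) (n : nat).

Lemma eigenvalue_trmx (A : 'M[F]_n) a : eigenvalue A^T a = eigenvalue A a.
Proof.
rewrite !eigenvalue_root_char /char_poly -[in LHS]det_tr /char_poly_mx.
by rewrite linearB /= tr_scalar_mx map_trmx trmxK.
Qed.

Lemma eigenvalue_col (A : 'M[F]_n) a (v : 'cV_n) :
  v != 0 -> A *m v = a *: v -> eigenvalue A a.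
Proof.
move=> v0 Av; rewrite -eigenvalue_trmx; apply/eigenvalueP; exists v^T.
  by rewrite -trmx_mul Av linearZ.
by rewrite trmx_eq0.
Qed.

Lemma size_uniq_eigenvalues (A : 'M[F]_n) (s : seq F) :
  uniq s -> all (eigenvalue A) s -> (size s <= n)%N.
Proof.
move=> s_uniq s_eig; rewrite -ltnS -(size_char_poly A) max_poly_roots //.
  by rewrite monic_neq0 ?char_poly_monic.
by apply: sub_all s_eig => a; rewrite eigenvalue_root_char.
Qed.

Section Simple.
Variables (A : 'M[F]_n) (s : seq F).
Hypotheses (size_s : size s = n) (uniq_s : uniq s) (eig_s : all (eigenvalue A) s).

Lemma eigenvalue_in_spectrum a : eigenvalue A a -> a \in s.
Proof.
move=> eAa; apply/negPn/negP => sNa.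
have := @size_uniq_eigenvalues A (a :: s).
by rewrite /= sNa uniq_s eAa eig_s size_s ltnn => /(_ isT isT).
Qed.

Lemma rank_eigenspace_simple a : eigenvalue A a -> \rank (eigenspace A a) = 1%N.
Proof.
move=> eAa; pose t (i : 'I_n) := s`_i.
have t_inj : injective t.
  by move=> i j /eqP; rewrite nth_uniq ?size_s // => /eqP/val_inj.
have [i0 ->] : exists i0, a = t i0.
  have sa := eigenvalue_in_spectrum eAa; move: (sa); rewrite -index_mem size_s => lt_a.
  by exists (Ordinal lt_a); rewrite /t nth_index.
have rank_gt0 i : (0 < \rank (eigenspace A (t i)))%N.
  by rewrite lt0n mxrank_eq0; apply: (allP eig_s); rewrite mem_nth ?size_s.
have : (\sum_i \rank (eigenspace A (t i)) <= n)%N.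
  have := @mxdirect_sum_eigenspace F 'I_n n A predT t (in2W t_inj).
  by rewrite mxdirectE /= => /eqP <-; apply: rank_leq_col.
rewrite (bigD1 i0) //=.
have : (\sum_(i | i != i0) 1 <= \sum_(i | i != i0) \rank (eigenspace A (t i)))%N.
  by apply: leq_sum => i _; apply: rank_gt0.
rewrite sum1_card cardC1 card_ord.
have := rank_gt0 i0; have := ltn_ord i0.
set r := \rank _; set rest := \sum_(i | _) _; lia.
Qed.

Lemma eigenvectors_colinear a (v w : 'rV_n) :
  v != 0 -> v *m A = a *: v -> w *m A = a *: w -> exists c, w = c *: v.
Proof.
move=> v0 /eigenspaceP vE /eigenspaceP wE.
have eAa : eigenvalue A a by apply/eigenvalueP; exists v => //; apply/eigenspaceP.
have /eqmxP vEE : (v == eigenspace A a)%MS.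
  have := mxrank_leqif_eq vE; rewrite rank_rV v0 rank_eigenspace_simple //.
  by move/geq_leqif; rewrite leqnn => /esym.
by apply/sub_rVP; rewrite vEE.
Qed.

End Simple.

Section SimpleColumns.
Variables (A : 'M[F]_n) (s : seq F).
Hypotheses (size_s : size s = n) (uniq_s : uniq s) (eig_s : all (eigenvalue A) s).

Lemma col_eigenvectors_colinear a (v w : 'cV_n) :
  v != 0 -> A *m v = a *: v -> A *m w = a *: w -> exists c, w = c *: v.
Proof.
move=> v0 Av Aw; have eig_sT : all (eigenvalue A^T) s.
  by apply: sub_all eig_s => b; rewrite eigenvalue_trmx.
have v0T : v^T != 0 by rewrite trmx_eq0.
have eigT (u : 'cV_n) : A *m u = a *: u -> u^T *m A^T = a *: u^T.
  by move=> Au; rewrite -trmx_mul Au linearZ.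
have [c wc] := eigenvectors_colinear size_s uniq_s eig_sT v0T (eigT v Av) (eigT w Aw).
by exists c; apply: trmx_inj; rewrite wc linearZ.
Qed.

Lemma eigenbasis_complete (f : 'I_n -> 'cV_n) (lam : 'I_n -> F) :
  (forall l, f l != 0) -> (forall l m c, f m = c *: f l -> m = l) ->
  (forall l, A *m f l = lam l *: f l) ->
  forall a g, g != 0 -> A *m g = a *: g -> exists l c, a = lam l /\ g = c *: f l.
Proof.
move=> f_neq0 f_indep Af a g g0 Ag.
have lam_inj : injective lam.
  move=> l m lam_lm; have Afm : A *m f m = lam l *: f m by rewrite Af lam_lm.
  by have [c /f_indep ->] := col_eigenvectors_colinear (f_neq0 l) (Af l) Afm.
have : a \in [seq lam l | l <- enum 'I_n].
  apply: (eigenvalue_in_spectrum (A := A)); last exact: eigenvalue_col Ag.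
  - by rewrite size_map size_enum_ord.
  - by rewrite map_inj_uniq ?enum_uniq.
  - by apply/allP => _ /mapP [l _ ->]; apply: eigenvalue_col (f_neq0 l) (Af l).
case/mapP => l _ al; rewrite al in Ag.
by have [c gc] := col_eigenvectors_colinear (f_neq0 l) (Af l) Ag; exists l, c.
Qed.

End SimpleColumns.

Lemma scale_shift_eigenvector (W : 'M[F]_n) (a b mu : F) (v : 'cV_n) :
  a * b != 0 ->
  (a *: (1%:M + b *: W)) *m v = mu *: v <-> W *m v = ((mu - a) / (a * b)) *: v.
Proof.
move=> ab0; rewrite -scalemxAl mulmxDl mul1mx -scalemxAl scalerDr scalerA.
split => [Wv | ->].
  apply: (scalerI ab0); rewrite scalerA mulrCA mulfV // mulr1 scalerBl -Wv.
  by rewrite addrAC subrr add0r.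
by rewrite scalerA mulrCA mulfV // mulr1 scalerBl addrC subrK.
Qed.

End SimpleSpectrum.

Lemma simple_spectrum_map (F K : fieldType) (phi : {rmorphism F -> K}) n (A : 'M[F]_n)
    (s : seq F) :
  size s = n -> uniq s -> all (eigenvalue A) s ->
  [/\ size (map phi s) = n, uniq (map phi s) & all (eigenvalue (map_mx phi A)) (map phi s)].
Proof.
move=> size_s uniq_s eig_s; rewrite size_map map_inj_uniq ?all_map; last exact: fmorph_inj.
by split=> //; apply: sub_all eig_s => a; rewrite /= eigenvalue_map.
Qed.

Section Phases.
Variable R : realType.
Implicit Types (k : int) (a t x : R).

Lemma tr_expiD a t : tr_expi (a + t) = tr_expi a * tr_expi t.
Proof. by rewrite /tr_expi cosD sinD; congr (_ +i* _); ring. Qed.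

Lemma tr_expi0 : tr_expi 0 = 1 :> R[i].
Proof. by rewrite /tr_expi cos0 sin0. Qed.

(* The scope [%R] selects [Num.conj], the conjugation of Defs; in this position a bare [^*]
   would be parsed as [conjc]. *)
Lemma tr_expiN t : tr_expi (- t) = (tr_expi t)^*%R.
Proof. by rewrite /tr_expi cosN sinN. Qed.

Lemma tr_expi_conjK t : tr_expi t * (tr_expi t)^* = 1.
Proof. by rewrite -tr_expiN -tr_expiD subrr tr_expi0. Qed.

Lemma tr_e2piB k x a : tr_e2pi k (x - a) = tr_phase k a * tr_e2pi k x.
Proof. by rewrite /tr_e2pi /tr_phase -tr_expiD; congr tr_expi; ring. Qed.

Lemma tr_e2pi0 k : tr_e2pi k 0 = 1 :> R[i].
Proof. by rewrite /tr_e2pi mulr0 tr_expi0. Qed.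

Lemma tr_phase0 a : tr_phase 0 a = 1 :> R[i].
Proof. by rewrite /tr_phase mulr0 mul0r oppr0 tr_expi0. Qed.

Lemma tr_expi_neq0 t : tr_expi t != 0.
Proof.
apply/eqP => e0; have := tr_expi_conjK t; rewrite e0 mul0r => /eqP.
by rewrite eq_sym oner_eq0.
Qed.

(* For k = 0 every phase is 1; for S = 1 the single band covers every index. *)
Lemma tr_phase_banded N S L (beta : seq R) (alpha : 'I_N -> R) k :
  (S = 1%N \/ k = 0) -> size L = S -> tr_band_width_vector N L ->
  tr_banded_vector L beta alpha ->
  forall j, tr_phase k (alpha j) = tr_phase k (nth 0 beta 0).
Proof.
move=> [-> | ->] size_L widths banded j; last by rewrite !tr_phase0.
case: L size_L widths banded => [|w [|]] //= _ /andP[_ /eqP sum_w] banded.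
rewrite (banded 0%N) // /tr_in_band /tr_band_start /= add0n.
by move: sum_w; rewrite /= addn0 => ->.
Qed.

End Phases.

Section Modes.
Variables (R : realType) (N : nat).
Implicit Types (g : 'cV[R[i]]_N) (k : int).

Lemma tr_mode_at0 g k j : tr_mode g k j 0 = g j 0.
Proof. by rewrite /tr_mode tr_e2pi0 mulr1. Qed.

Lemma tr_modeZ (a : R[i]) g k : tr_mode (a *: g) k = fun j x => a * tr_mode g k j x.
Proof. by apply/funext => j; apply/funext => x; rewrite /tr_mode mxE mulrA. Qed.

Lemma tr_transfer_mode (Wd : 'M[R]_N) alpha eps g k p :
  (forall j, tr_phase k (alpha j) = p) ->
  tr_transfer Wd alpha eps (tr_mode g k) =
  tr_mode ((p *: map_mx (real_complex R) (1%:M + eps *: Wd)) *m g) k.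
Proof.
move=> phase_p; apply/funext => j; apply/funext => x.
rewrite /tr_transfer /tr_mode -scalemxAl !mxE big_distrr big_distrl /=.
by apply: eq_bigr => j' _; rewrite tr_e2piB phase_p !mxE; ring.
Qed.

Lemma tr_is_eigenfunction_modeP (P : tr_fun_M R N -> tr_fun_M R N)
    (B : 'M[R[i]]_N) k :
  (forall g, P (tr_mode g k) = tr_mode (B *m g) k) ->
  forall g mu, tr_is_eigenfunction P (tr_mode g k) mu <-> g != 0 /\ B *m g = mu *: g.
Proof.
move=> PB g mu; rewrite /tr_is_eigenfunction PB; split.
- move=> [[j [x gx]] eig]; split.
    by apply/cV0Pn; exists j; apply: contraNneq gx => g0; rewrite /tr_mode g0 mul0r.
  apply/matrixP => i c; rewrite ord1.
  by have := eig i 0; rewrite !tr_mode_at0 => ->; rewrite mxE.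
- move=> [/cV0Pn [j gj] Bg]; split; first by exists j, 0; rewrite tr_mode_at0.
  by move=> j' x; rewrite Bg tr_modeZ.
Qed.

Lemma tr_transfer_eigenfunction_modeP (Wd : 'M[R]_N) alpha eps k p g mu :
  (forall j, tr_phase k (alpha j) = p) -> p * eps%:C != 0 ->
  tr_is_eigenfunction (tr_transfer Wd alpha eps) (tr_mode g k) mu <->
  g != 0 /\ map_mx (real_complex R) Wd *m g = ((mu - p) / (p * eps%:C)) *: g.
Proof.
move=> phase_p peps0; have transfer_mode h : tr_transfer Wd alpha eps (tr_mode h k) =
    tr_mode ((p *: (1%:M + eps%:C *: map_mx (real_complex R) Wd)) *m h) k.
  by rewrite (tr_transfer_mode _ _ _ phase_p) map_mxD map_mx1 map_mxZ.
by rewrite (tr_is_eigenfunction_modeP transfer_mode) scale_shift_eigenvector.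
Qed.

End Modes.

Section Orthonormal.
Variables (R : realType) (N : nat) (f : 'I_N -> 'cV[R[i]]_N).
Hypothesis orth : tr_orthonormal f.

Lemma orthonormal_neq0 l : f l != 0.
Proof.
apply/eqP => fl0; have := orth l l; rewrite eqxx fl0 big1 => [/eqP|j _].
  by rewrite eq_sym oner_eq0.
by rewrite mxE mul0r.
Qed.

Lemma orthonormal_colinear l m c : f m = c *: f l -> m = l.
Proof.
move=> fm; apply/eqP; apply: contraNT (orthonormal_neq0 m) => ml.
have := orth m l; rewrite (negbTE ml) fm.
under eq_bigr do rewrite mxE -mulrA.
by rewrite -big_distrr /= orth eqxx mulr1 => ->; rewrite scale0r.
Qed.

End Orthonormal.

Section L2.
Variable R : realType.
Local Notation mu := (@lebesgue_measure R).
Local Notation I01 := (`[0, 1]%classic : set R).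
Implicit Types (c : R[i]) (h : R -> R[i]) (k : int).

(* [tr_integrable_M H] unfolds to [forall j, cintegrable01 (H j)]. *)
Definition cintegrable01 (h : R -> R[i]) : Prop :=
  mu.-integrable I01 (fun x => (complex.Re (h x))%:E) /\
  mu.-integrable I01 (fun x => (complex.Im (h x))%:E).

Lemma measurable01 : @measurable _ (measurableTypeR R) I01.
Proof. exact: measurable_itv. Qed.

Lemma integrable01M_bounded (u g : R -> R) : continuous g -> (forall x, `|g x| <= 1) ->
  mu.-integrable I01 (fun x => (u x)%:E) -> mu.-integrable I01 (fun x => (u x * g x)%:E).
Proof.
move=> g_cont g_le1 iu.
have g_bnd : [bounded g x | x in I01].
  exists 1; split; first exact: num_real.
  by move=> M M1 x _; apply: le_trans (g_le1 x) (ltW M1).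
have mg : measurable_fun I01 g := measurable_funTS (continuous_measurable_fun g_cont).
apply: (eq_integrable measurable01 _ _ _ (integrableMl measurable01 iu mg g_bnd)) => x _ /=.
by rewrite EFinM.
Qed.

Lemma integrable01Zl (a : R) (u : R -> R) :
  mu.-integrable I01 (fun x => (u x)%:E) -> mu.-integrable I01 (EFin \o (fun x => a * u x)).
Proof.
move=> iu; apply: (eq_integrable measurable01 _ _ _ (integrableZl measurable01 a iu)).
by move=> x _ /=; rewrite EFinM.
Qed.

Lemma cintegrable01Zl c h : cintegrable01 h -> cintegrable01 (fun x => c * h x).
Proof.
case: c => a b [iRe iIm]; have Z := integrable01Zl; split.
- apply: (eq_integrable measurable01 _ _ _ (integrableB measurable01 (Z a _ iRe) (Z b _ iIm))).
  by move=> x _ /=; case: (h x) => u v; rewrite -EFinB.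
- apply: (eq_integrable measurable01 _ _ _ (integrableD measurable01 (Z a _ iIm) (Z b _ iRe))).
  by move=> x _ /=; case: (h x) => u v; rewrite -EFinD.
Qed.

Lemma cintegrable01M_expi a h :
  cintegrable01 h -> cintegrable01 (fun x => h x * tr_expi (a * x)).
Proof.
have cos_cont : continuous (fun x => cos (a * x)).
  by move=> x; apply: continuous_comp; [exact: mulrl_continuous | exact: continuous_cos].
have sin_cont : continuous (fun x => sin (a * x)).
  by move=> x; apply: continuous_comp; [exact: mulrl_continuous | exact: continuous_sin].
have C u := @integrable01M_bounded u _ cos_cont (fun x => cos_max _).
have S u := @integrable01M_bounded u _ sin_cont (fun x => sin_max _).
case=> iRe iIm; split.
- apply: (eq_integrable measurable01 _ _ _ (integrableB measurable01 (C _ iRe) (S _ iIm))).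
  by move=> x _ /=; case: (h x) => u v; rewrite -EFinB.
- apply: (eq_integrable measurable01 _ _ _ (integrableD measurable01 (S _ iRe) (C _ iIm))).
  by move=> x _ /=; case: (h x) => u v; rewrite -EFinD.
Qed.

Lemma tr_cint01Zl c h : cintegrable01 h -> tr_cint01 (fun x => c * h x) = c * tr_cint01 h.
Proof.
case: c => a b [iRe iIm]; rewrite /tr_cint01.
have eRe : (fun x => complex.Re ((a +i* b) * h x)) =
           (fun x => a * complex.Re (h x) - b * complex.Im (h x)).
  by apply/funext => x; case: (h x).
have eIm : (fun x => complex.Im ((a +i* b) * h x)) =
           (fun x => a * complex.Im (h x) + b * complex.Re (h x)).
  by apply/funext => x; case: (h x).
rewrite eRe eIm RintegralB ?RintegralD ?RintegralZl //;
  by [exact: measurable01 | exact: integrable01Zl].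
Qed.

Lemma tr_cint01_cst c : tr_cint01 (fun=> c) = c.
Proof.
case: c => a b; rewrite /tr_cint01 /= !Rintegral_cst ?measurable01 //.
have := lebesgue_measure_itv `[(0:R), 1]%R; rewrite /= lte_fin ltr01 oppr0 adde0 => ->.
by rewrite !mulr1.
Qed.

Lemma tr_mode_conj N (v : 'cV[R[i]]_N) k j x :
  (tr_mode v k j x)^*%R = (v j 0)^* * tr_expi (- (2 * pi * k%:~R) * x).
Proof. by rewrite /tr_mode /tr_e2pi rmorphM /= -tr_expiN mulNr. Qed.

Lemma cintegrable01_mul_conj_mode N (v : 'cV[R[i]]_N) k j h :
  cintegrable01 h -> cintegrable01 (fun x => h x * (tr_mode v k j x)^*).
Proof.
move=> ih; have -> : (fun x => h x * (tr_mode v k j x)^*) =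
    (fun x => (v j 0)^* * (h x * tr_expi (- (2 * pi * k%:~R) * x))).
  by apply/funext => x; rewrite tr_mode_conj mulrCA.
exact/cintegrable01Zl/cintegrable01M_expi.
Qed.

Lemma tr_inner_MZr N (H G : tr_fun_M R N) a :
  (forall j, cintegrable01 (fun x => H j x * (G j x)^*)) ->
  tr_inner_M H (fun j x => a * G j x) = a^* * tr_inner_M H G.
Proof.
move=> iHG; rewrite /tr_inner_M [RHS]mulrCA [in RHS]big_distrr /=; congr (_ * _).
apply: eq_bigr => j _; rewrite -tr_cint01Zl //; congr tr_cint01.
by apply/funext => x; rewrite rmorphM mulrCA.
Qed.

Lemma tr_inner_mode N (v : 'cV[R[i]]_N) k :
  tr_inner_M (tr_mode v k) (tr_mode v k) = (N%:R^-1)%:C * \sum_j v j 0 * (v j 0)^*.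
Proof.
rewrite /tr_inner_M; congr (_ * _); apply: eq_bigr => j _.
rewrite -[RHS]tr_cint01_cst; congr tr_cint01.
by apply/funext => x; rewrite /tr_mode rmorphM mulrACA tr_expi_conjK mulr1.
Qed.

Lemma tr_proj_spanZ N (v : 'cV[R[i]]_N) k a (H : tr_fun_M R N) :
  a != 0 -> tr_integrable_M H ->
  tr_proj_span (tr_mode (a *: v) k) H = tr_proj_span (tr_mode v k) H.
Proof.
move=> a0 iH; apply/funext => j; apply/funext => x.
have normZ : \sum_j (a *: v) j 0 * ((a *: v) j 0)^* = a * a^* * \sum_j v j 0 * (v j 0)^*.
  by rewrite big_distrr; apply: eq_bigr => i _; rewrite mxE rmorphM mulrACA.
rewrite /tr_proj_span !tr_inner_mode normZ tr_modeZ tr_inner_MZr; last first.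
  by move=> i; apply: cintegrable01_mul_conj_mode (iH i).
have ac0 : a^* != 0 by rewrite conjC_eq0.
set X := tr_inner_M _ _; set n := (_%:C); set S := \sum_i _; set g := tr_mode v k j x.
transitivity ((a^* / a^*) * (a / a) * (X / (n * S) * g)); first by rewrite !invfM; ring.
by rewrite !divff // !mul1r.
Qed.

End L2.

Theorem proposition3p7 (R : realType) (N S : nat) (L : seq nat)
  (Wd : 'M[R]_N) (beta : seq R) (alpha : 'I_N -> R) (k : int)
  (f : 'I_N -> 'cV[R[i]]_N) (lamh : 'I_N -> R[i]) :
  (1 <= N)%N -> (1 <= S <= N)%N ->
  size L = S -> tr_band_width_vector N L -> tr_admissible L Wd ->
  size beta = S -> tr_in_Gamma beta -> tr_banded_vector L beta alpha ->
  (S = 1%N \/ k = 0) ->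
  tr_orthonormal f ->
  (forall l : 'I_N,
     (tr_phase k (nth 0 beta 0) *: map_mx (real_complex R) Wd) *m f l
       = lamh l *: f l) ->
  forall eps : R, 0 < eps ->
  [/\ (* each F^(l)_k is an eigenfunction with eigenvalue lambda^(l)_{k,eps} *)
      (forall l : 'I_N,
         tr_is_eigenfunction (tr_transfer Wd alpha eps) (tr_mode (f l) k)
           (tr_phase k (nth 0 beta 0) + eps%:C * lamh l)),
      (* up to scalars, these are all eigenfunctions of the form f(j) e^{2 pi i k x} *)
      (forall (g : 'cV[R[i]]_N) (mu : R[i]),
         tr_is_eigenfunction (tr_transfer Wd alpha eps) (tr_mode g k) mu ->
         exists (l : 'I_N) (a : R[i]),
           g = a *: f l /\ mu = tr_phase k (nth 0 beta 0) + eps%:C * lamh l) &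
      (* the orthogonal projection onto the eigenfunction with eigenvalue
         lambda^(l)_{k,eps} equals the projection onto span{F^(l)_k} *)
      (forall (l : 'I_N) (g : 'cV[R[i]]_N),
         tr_is_eigenfunction (tr_transfer Wd alpha eps) (tr_mode g k)
           (tr_phase k (nth 0 beta 0) + eps%:C * lamh l) ->
         forall H : tr_fun_M R N, tr_integrable_M H ->
         forall j x, tr_proj_span (tr_mode g k) H j x = tr_proj_span (tr_mode (f l) k) H j x)].
Proof.
move=> _ _ size_L widths [_ _ _ [s [size_s uniq_s eig_s]] _] _ _ banded S1_or_k0.
move=> orth eig_f eps eps_gt0.
set p := tr_phase k (nth 0 beta 0); set Wc := map_mx (real_complex R) Wd.
have p0 : p != 0 := tr_expi_neq0 _.
have eps0 : eps%:C != 0 by rewrite eq_complex /= negb_and (gt_eqF eps_gt0).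
have peps0 := mulf_neq0 p0 eps0.
have eigenfunP g mu := tr_transfer_eigenfunction_modeP Wd g mu
  (tr_phase_banded S1_or_k0 size_L widths banded) peps0.
have lamE l : (p + eps%:C * lamh l - p) / (p * eps%:C) = lamh l / p.
  by field; apply/andP; split.
have Wc_f l : Wc *m f l = (lamh l / p) *: f l.
  by apply: (scalerI p0); rewrite scalemxAl eig_f scalerA mulrC divfK.
have [size_sC uniq_sC eig_sC] := simple_spectrum_map (real_complex R) size_s uniq_s eig_s.
have f_neq0 := orthonormal_neq0 orth.
split.
- by move=> l; apply/eigenfunP; rewrite lamE.
- move=> g mu /eigenfunP [g0 /(eigenbasis_complete size_sC uniq_sC eig_sC f_neq0
    (orthonormal_colinear orth) Wc_f g0) [l [c [mu_l ->]]]].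
  exists l, c; split => //; rewrite -[mu](subrK p) [LHS]addrC; congr (_ + _).
  by rewrite -(divfK peps0 (mu - p)) mu_l; field.
- move=> l g /eigenfunP [g0]; rewrite lamE => Wc_g H iH j x.
  have [c gc] := col_eigenvectors_colinear size_sC uniq_sC eig_sC (f_neq0 l) (Wc_f l) Wc_g.
  have c0 : c != 0 by apply: contraNneq g0 => c0; rewrite gc c0 scale0r.
  by rewrite gc tr_proj_spanZ.
Qed.
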